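(* Let $A$ be an abelian topological group such that $\alpha_A$ is continuous. Then $\hat A$ has the quasi-convex compactness property.
   Context: $\mathbb{T}=\mathbb{R}/\mathbb{Z}$, $\Lambda_1$ is the image of $[-\tfrac14,\tfrac14]$ in $\mathbb{T}$. For an abelian topological group $B$, $\hat B$ is the group of continuous homomorphisms $B\to\mathbb{T}$ with the compact-open topology and $\alpha_B\colon B\to\hat{\hat B}$, $\alpha_B(b)(\chi)=\chi(b)$. For $S\subseteq B$, $S^\vartriangleright=\{\chi\in\hat B\mid\chi(S)\subseteq\Lambda_1\}$; for $\Phi\subseteq\hat B$, $\Phi^\vartriangleleft=\{b\in B\mid\chi(b)\in\Lambda_1\ \forall\chi\in\Phi\}$. $B$ has the quasi-convex compactness property (QCP) if for every compact $K\subseteq B$ the set $K^{\vartriangleright\vartriangleleft}$ (polars taken with respect to the pair $B,\hat B$) is compact. For $B=\hat A$, the polars are taken with respect to the pair $\hat A,\hat{\hat A}$. *)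

From HB Require Import structures.
From mathcomp Require Import all_boot all_order all_algebra.
From mathcomp Require Import generic_quotient.
From mathcomp Require Import all_classical all_reals all_analysis.
Set Implicit Arguments. Unset Strict Implicit. Unset Printing Implicit Defensive.
Import Order.TTheory GRing.Theory Num.Theory.
Import numFieldNormedType.Exports.
Local Open Scope classical_set_scope.
Local Open Scope ring_scope.
Local Open Scope quotient_scope.

Section Torus.
Variable R : realType.

Definition modZ : rel R := fun x y => (x - y) \is a Num.int.

Lemma modZ_refl : reflexive modZ.
Proof. by move=> x; rewrite /modZ subrr rpred0. Qed.
Lemma modZ_sym : symmetric modZ.
Proof. by move=> x y; rewrite /modZ -opprB rpredN. Qed.
Lemma modZ_trans : transitive modZ.
Proof.
move=> y x z hxy hyz; rewrite /modZ -(subrKA y) addrC.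
by rewrite rpredD.
Qed.

Definition modZ_equiv : equiv_rel R := EquivRel modZ modZ_refl modZ_sym modZ_trans.

Definition torus : Type := quotient_topology {eq_quot modZ_equiv}.
End Torus.

HB.instance Definition _ (R : realType) := Choice.on (torus R).
HB.instance Definition _ (R : realType) := Quotient.on (torus R).
HB.instance Definition _ (R : realType) :=
  Topological.copy (torus R) (quotient_topology {eq_quot modZ_equiv R}).

Section TorusZmod.
Variable R : realType.
Local Notation T := (torus R).
Local Notation pi := (\pi_T : R -> T).

Lemma torus_eqP (x y : R) : pi x = pi y <-> modZ x y.
Proof.
change (\pi_{eq_quot modZ_equiv R} x = \pi_{eq_quot modZ_equiv R} y <->
  modZ_equiv R x y).
by split => [/eqmodP|/eqmodP].
Qed.

Lemma torus_reprK (x : R) : modZ (repr (pi x)) x.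
Proof. by apply/torus_eqP; rewrite reprK. Qed.

Definition torus_zero : T := pi 0.
Definition torus_opp (x : T) : T := pi (- repr x).
Definition torus_add (x y : T) : T := pi (repr x + repr y).

Lemma torus_addE (x y : R) : torus_add (pi x) (pi y) = pi (x + y).
Proof.
apply/torus_eqP; rewrite /modZ opprD addrACA.
by apply: rpredD; apply: torus_reprK.
Qed.

Lemma torus_oppE (x : R) : torus_opp (pi x) = pi (- x).
Proof.
apply/torus_eqP; rewrite /modZ opprK addrC -opprB rpredN.
exact: torus_reprK.
Qed.

Lemma torus_piP (x : T) : exists x' : R, x = pi x'.
Proof. by exists (repr x); rewrite reprK. Qed.

Lemma torus_addA : associative torus_add.
Proof.
move=> x y z; have [x' ->] := torus_piP x; have [y' ->] := torus_piP y.
have [z' ->] := torus_piP z.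
by rewrite !torus_addE addrA.
Qed.
Lemma torus_addC : commutative torus_add.
Proof.
move=> x y; have [x' ->] := torus_piP x; have [y' ->] := torus_piP y.
by rewrite !torus_addE addrC.
Qed.
Lemma torus_add0 : left_id torus_zero torus_add.
Proof.
by move=> x; have [x' ->] := torus_piP x; rewrite /torus_zero torus_addE add0r.
Qed.
Lemma torus_addN : left_inverse torus_zero torus_opp torus_add.
Proof.
by move=> x; have [x' ->] := torus_piP x; rewrite torus_oppE torus_addE addNr.
Qed.

HB.instance Definition _ := GRing.isZmodule.Build T
  torus_addA torus_addC torus_add0 torus_addN.
End TorusZmod.

Unset Implicit Arguments.

Definition Lambda1 (R : realType) : set (torus R) :=
  [set \pi_(torus R) x | x in [set x : R | - 4^-1 <= x <= 4^-1]].

(** Polars with respect to a pairing  ev : X -> Y -> T ;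
    Y0 is the ambient dual (the set of characters) *)
Definition rpolar (R : realType) (X Y : Type) (ev : X -> Y -> torus R)
  (Y0 : set Y) (S : set X) : set Y :=
  [set y | Y0 y /\ forall x, S x -> Lambda1 R (ev x y)].

Definition lpolar (R : realType) (X Y : Type) (ev : X -> Y -> torus R)
  (Phi : set Y) : set X :=
  [set x | forall y, Phi y -> Lambda1 R (ev x y)].

Definition characters (R : realType) (A : topologicalZmodType) :
    set {compact-open, A -> torus R} :=
  [set f | continuous (f : A -> torus R) /\ {morph f : x y / x + y}].

(** The dual group \hat A, with the compact-open topology (subspace topology
    inherited from {compact-open, A -> T}). *)
Definition dual (R : realType) (A : topologicalZmodType) : topologicalType :=
  set_type (characters R A).

Definition dual_val (R : realType) (A : topologicalZmodType) (chi : dual R A) :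
  A -> torus R := set_val chi.

(** Characters of \hat A: continuous homomorphisms \hat A -> T.  The group law
    of \hat A is pointwise addition of characters. *)
Definition bicharacters (R : realType) (A : topologicalZmodType) :
    set (dual R A -> torus R) :=
  [set phi | continuous phi /\
     forall chi psi zeta : dual R A,
       (forall a, dual_val R A zeta a = dual_val R A chi a + dual_val R A psi a) ->
       phi zeta = phi chi + phi psi].

Definition bidual_ev (R : realType) (A : topologicalZmodType)
  (chi : dual R A) (phi : dual R A -> torus R) : torus R := phi chi.

Definition dual_QCP (R : realType) (A : topologicalZmodType) : Prop :=
  forall K : set (dual R A), compact K ->
    compact (lpolar R _ _ (bidual_ev R A)
               (rpolar R _ _ (bidual_ev R A) (bicharacters R A) K)).

Definition alpha (R : realType) (A : topologicalZmodType) (a : A) :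
  {compact-open, dual R A -> torus R} := fun chi => dual_val R A chi a.

(* By continuity of alpha at 0
   and compactness of K there is a neighbourhood N of 0 such that every chi in
   K sends N into the arc of radius 2^-n / 4; hence alpha (2^j c) lies in K^|>
   for c in N and j <= n, so every chi in K^(|> <|) sends 2^j c into Lambda1
   for all j <= n, which forces chi c into the arc of radius 2^-n / 4.  Thus
   K^(|> <|) is equicontinuous, and an Ascoli-type argument shows it is
   compact: the pointwise limit of an ultrafilter containing K^(|> <|) is a
   continuous character, equicontinuity upgrades pointwise convergence to
   uniform convergence on compact sets, and the polar conditions pass to the
   limit because Lambda1 is closed. *)

From HB Require Import structures.
From mathcomp Require Import all_boot all_order all_algebra generic_quotient.
From mathcomp Require Import all_classical all_reals all_analysis.
From mathcomp Require Import zify ring lra.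
Import Order.TTheory GRing.Theory Num.Theory.
Import numFieldNormedType.Exports.
Local Open Scope classical_set_scope.
Local Open Scope ring_scope.
Local Open Scope quotient_scope.

Section TorusTopology.
Context {R : realType}.
Local Notation T := (torus R).
Local Notation pi := (\pi_T : R -> T).

Lemma int_norm_lt1_eq0 (x : R) : x \is a Num.int -> `|x| < 1 -> x = 0.
Proof.
move=> /intrP [m ->]; rewrite -intr_norm -[1]/(1%:~R) ltr_int => m_small.
by have -> : m = 0 by lia.
Qed.

Lemma int_of_approx (w : R) :
  (forall e, 0 < e -> exists2 n, n \is a Num.int & `|w - n| < e) ->
  w \is a Num.int.
Proof.
move=> approx; have [n0 n0Z w_n0] := approx 2^-1 ltac:(by []).
suff : `|w - n0| <= 0 by rewrite normr_le0 subr_eq0 => /eqP ->.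
apply/ler_addgt0Pr => e e_gt0; rewrite add0r.
have [|n nZ w_n] := approx (Num.min e 2^-1).
  by rewrite lt_min e_gt0 invr_gt0 ltr0n.
move: w_n; rewrite lt_min => /andP [w_n_e w_n_half].
suff <- : n = n0 by exact: ltW.
apply/eqP; rewrite -subr_eq0; apply/eqP/int_norm_lt1_eq0; first exact: rpredB.
rewrite (_ : n - n0 = (w - n0) - (w - n)); last by ring.
by apply: le_lt_trans (ler_normB _ _) _; lra.
Qed.

Lemma torus_piD (x y : R) : pi (x + y) = pi x + pi y.
Proof. exact: (esym (torus_addE x y)). Qed.

Lemma torus_piN (x : R) : pi (- x) = - pi x.
Proof. exact: (esym (torus_oppE x)). Qed.

Lemma torus_piB (x y : R) : pi (x - y) = pi x - pi y.
Proof. by rewrite torus_piD torus_piN. Qed.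

Lemma torus_piMn (x : R) n : pi (x *+ n) = pi x *+ n.
Proof. by elim: n => [|n IH]; rewrite ?mulr0n // !mulrS torus_piD IH. Qed.

Lemma open_torus_ball (x e : R) : open (pi @` ball x e).
Proof.
change (open (pi @^-1` (pi @` ball x e))).
rewrite openE => y [z x_z /torus_eqP zy_int].
apply/nbhs_ballP; exists (e - `|x - z|); first by rewrite /= subr_gt0.
move=> w y_w; exists (z + (w - y)); last first.
  by apply/torus_eqP; rewrite /modZ (_ : z + (w - y) - w = z - y) //; ring.
move: x_z y_w; rewrite /ball /= => x_z y_w.
rewrite (_ : x - (z + (w - y)) = (x - z) - (w - y)); last by ring.
by apply: le_lt_trans (ler_normB _ _) _; rewrite -ltrBrDl distrC.
Qed.

Lemma nbhs_torus_ball (x : R) {e : R} : 0 < e -> nbhs (pi x) (pi @` ball x e).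
Proof.
move=> e_gt0; apply: open_nbhs_nbhs; split; first exact: open_torus_ball.
by exists x => //; exact: ballxx.
Qed.

Lemma nbhs_torusP (x : R) (W : set T) : nbhs (pi x) W ->
  exists2 e, 0 < e & forall y, ball x e y -> W (pi y).
Proof. by move=> /pi_continuous /nbhs_ballP [e e_gt0 xeW]; exists e. Qed.

Lemma torus_hausdorff : hausdorff_space T.
Proof.
move=> p q; have [x ->] := torus_piP p; have [y ->] := torus_piP q.
move=> pq_close; apply/torus_eqP/int_of_approx => e e_gt0.
have e2_gt0 : 0 < e / 2 by rewrite divr_gt0.
have [_ [[z x_z <-] [w y_w /torus_eqP zw_int]]] :=
  pq_close _ _ (nbhs_torus_ball x e2_gt0) (nbhs_torus_ball y e2_gt0).
exists (z - w); first by rewrite -opprB rpredN.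
move: x_z y_w; rewrite /ball /= => x_z y_w.
rewrite (_ : x - y - (z - w) = (x - z) - (y - w)); last by ring.
by apply: le_lt_trans (ler_normB _ _) _; rewrite (splitr e) ltrD.
Qed.

Lemma compact_torus_image (a b : R) : compact (pi @` `[a, b]).
Proof.
apply: continuous_compact; last exact: segment_compact.
by apply: continuous_subspaceT => y; exact: pi_continuous.
Qed.

Lemma torus_compact : compact [set: T].
Proof.
suff -> : [set: T] = pi @` `[0, 1] by exact: compact_torus_image.
apply/seteqP; split => // t _; have [x ->] := torus_piP t.
exists (x - (Num.floor x)%:~R).
  have := floor_le x; have := floorD1_gt x; rewrite intrD => x_lt x_ge.
  by rewrite /= in_itv /=; apply/andP; split; lra.
apply/torus_eqP; rewrite /modZ.
rewrite (_ : x - _ - x = - (Num.floor x)%:~R); last by ring.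
by rewrite rpredN intr_int.
Qed.

Definition Lambda (d : R) : set T := pi @` [set x : R | - d <= x <= d].

Lemma Lambda1E : Lambda1 R = Lambda 4^-1. Proof. by []. Qed.

Lemma closed_Lambda d : closed (Lambda d).
Proof.
apply: compact_closed torus_hausdorff _.
rewrite /Lambda (_ : [set x | _] = `[- d, d]%classic).
  exact: compact_torus_image.
by apply/seteqP; split => x; rewrite /= in_itv.
Qed.

Lemma Lambda_repr {d : R} {t : T} :
  Lambda d t -> exists2 y, `|y| <= d & t = pi y.
Proof. by case=> x x_d <-; exists x => //; rewrite ler_norml. Qed.

Lemma Lambda_pi d y : `|y| <= d -> Lambda d (pi y).
Proof. by move=> y_d; exists y => //; rewrite /= -ler_norml. Qed.

Lemma nbhs_Lambda_shift (t : T) {e : R} :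
  0 < e -> nbhs t [set u | Lambda e (u - t)].
Proof.
have [x ->] := torus_piP t => e_gt0.
apply: filterS (nbhs_torus_ball x e_gt0) => _ [y x_y <-].
rewrite /= -torus_piB; apply: Lambda_pi.
by move: x_y; rewrite /ball /= distrC => /ltW.
Qed.

Lemma nbhs_torus_LambdaD {t : T} {W : set T} : nbhs t W ->
  exists2 e, 0 < e & forall u v, Lambda e u -> Lambda e v -> W (t + u + v).
Proof.
have [x ->] := torus_piP t => /nbhs_torusP [e e_gt0 x_W].
exists (e / 4); first by rewrite divr_gt0.
move=> _ _ /Lambda_repr [y y_small ->] /Lambda_repr [z z_small ->].
rewrite -!torus_piD; apply: x_W; rewrite /ball /= -addrA opprD addNKr normrN.
by apply: le_lt_trans (ler_normD _ _) _; lra.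
Qed.

Lemma cvg_torusD (I : Type) (G : set_system I) {G_filter : Filter G}
    (u v : I -> T) (s t : T) :
  u @ G --> s -> v @ G --> t -> (fun i => u i + v i) @ G --> s + t.
Proof.
move=> u_s v_t W /nbhs_torus_LambdaD [e e_gt0 W_e].
have u_near : G [set i | Lambda e (u i - s)] :=
  u_s _ (nbhs_Lambda_shift s e_gt0).
have v_near : G [set i | Lambda e (v i - t)] :=
  v_t _ (nbhs_Lambda_shift t e_gt0).
change (G [set i | W (u i + v i)]).
apply: filterS (filterI u_near v_near) => i [u_i v_i].
by rewrite /= -[u i](subrK s) -[v i](subrK t) addrACA addrC addrA; apply: W_e.
Qed.

(* Doubling a point of [-1/4, 1/4] cannot wrap around: the representatives
   of 2y and of a point of Lambda1 differ by at most 3/4 < 1. *)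
Lemma Lambda1_double y : `|y| <= 4^-1 -> Lambda1 R (pi (y *+ 2)) ->
  `|y *+ 2| <= 4^-1.
Proof.
move=> y_small /Lambda_repr [z z_small /torus_eqP yz_int].
suff -> : y *+ 2 = z by [].
apply/eqP; rewrite -subr_eq0; apply/eqP/int_norm_lt1_eq0 => //.
apply: le_lt_trans (ler_normB _ _) _; rewrite normrMn -mulr_natr.
have := normr_ge0 y; lra.
Qed.

Lemma Lambda1_iter_double m y : `|y| <= 4^-1 ->
  (forall j, (j <= m)%N -> Lambda1 R (pi (y *+ (2 ^ j)))) ->
  `|y| * 2 ^+ m <= 4^-1.
Proof.
elim: m y => [|m IH] y y_small y_Lambda; first by rewrite expr0 mulr1.
have y2_small : `|y *+ 2| <= 4^-1.
  by apply: Lambda1_double => //; rewrite -[2%N]expn1; exact: y_Lambda.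
rewrite exprS mulrA mulr_natr -normrMn.
by apply: IH => // j j_le; rewrite -mulrnA -expnS; apply: y_Lambda.
Qed.

End TorusTopology.

Lemma nbhs_translate {M : topologicalZmodType} {N : set M} (a : M) :
  nbhs 0 N -> nbhs a [set b | N (b - a)].
Proof.
have sub_a : (fun b : M => b - a) @ nbhs a --> a - a.
  apply: (@continuous_comp _ _ _ (fun b => (b, a))
    (fun x : M * M => x.1 - x.2)).
    by apply: cvg_pair; [exact: cvg_id | exact: cvg_cst].
  exact: sub_continuous.
by rewrite subrr in sub_a; exact: sub_a.
Qed.

Lemma set_type_cvg {X : topologicalType} {P : set X}
    (F : set_system (set_type P)) {F_filter : Filter F} (x : set_type P) :
  set_val @ F --> set_val x -> F --> x.
Proof.
move=> F_x B; rewrite nbhsE; case=> _ [[U U_open <-] U_x] UB.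
by apply: filterS UB _; exact: F_x _ (open_nbhs_nbhs (conj U_open U_x)).
Qed.

Lemma ultra_cvg_compact_space {I : Type} {T : topologicalType}
    {F : set_system I} (g : I -> T) :
  compact [set: T] -> UltraFilter F -> exists p : T, g @ F --> p.
Proof.
move=> T_compact F_ultra.
have [p [_ p_cluster]] := T_compact (g @ F) _ filterT.
exists p => W p_W; have [gW|gWC] := in_ultra_setVsetC (g @^-1` W) F_ultra => //.
by have [t []] := p_cluster (~` W) W gWC p_W.
Qed.

Section Dual.
Variables (R : realType) (A : topologicalZmodType).
Local Notation T := (torus R).
Local Notation D := (dual R A).
Local Notation ev chi a := (dual_val R A chi a).

Lemma dual_valD (chi : D) : {morph dual_val R A chi : a b / a + b}.
Proof. by have [_] := set_valP chi. Qed.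

Lemma dual_val0 (chi : D) : ev chi 0 = 0.
Proof. by apply: (addrI (ev chi 0)); rewrite -dual_valD !addr0. Qed.

Lemma dual_valMn (chi : D) a n : ev chi (a *+ n) = ev chi a *+ n.
Proof.
by elim: n => [|n IH]; rewrite ?mulr0n ?dual_val0 // !mulrS dual_valD IH.
Qed.

Lemma eval_continuous (a : A) : continuous (fun chi : D => ev chi a).
Proof.
move=> chi W; rewrite nbhsE; case=> U [U_open U_a] UW.
have [|B [B_open B_chi B_sub]] :=
  @initial_continuous _ _ (@set_val _ (characters R A)) chi
    ([set g | g @` [set a] `<=` U] : set {compact-open, A -> T}).
  apply: open_nbhs_nbhs; split.
    exact: compact_open_open (@compact_set1 _ a) U_open.
  by rewrite /= image_set1 => y ->.
rewrite nbhsE; exists B; first by split.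
by move=> psi /B_sub psi_a; apply: UW; apply: psi_a; exists a.
Qed.

Lemma eval_bicharacter (a : A) : bicharacters R A (fun chi : D => ev chi a).
Proof. by split; [exact: eval_continuous | move=> chi psi zeta; apply]. Qed.

End Dual.

Lemma exists_expr2_gt {F : archiRealFieldType} (x : F) : exists n, x < 2 ^+ n.
Proof.
exists (Num.truncn x).+1; apply: lt_le_trans (truncnS_gt x) _.
by rewrite -natrX ler_nat ltnW // ltn_expl.
Qed.

Section Bipolar.
Variables (R : realType) (A : topologicalZmodType) (K : set (dual R A)).
Hypotheses (K_compact : compact K) (alpha_continuous : continuous (alpha R A)).
Local Notation T := (torus R).
Local Notation pi := (\pi_T : R -> T).
Local Notation D := (dual R A).
Local Notation ev chi a := (dual_val R A chi a).
Local Notation Kpolar := (rpolar R _ _ (bidual_ev R A) (bicharacters R A) K).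
Local Notation Kbipolar := (lpolar R _ _ (bidual_ev R A) Kpolar).

Lemma eval_in_polar a : (forall chi, K chi -> Lambda1 R (ev chi a)) ->
  Kpolar (fun chi : D => ev chi a).
Proof. by move=> K_a; split; [exact: eval_bicharacter | exact: K_a]. Qed.

Lemma near0_eval_doublings_in_polar n : exists2 N : set A, nbhs 0 N &
  forall c j, N c -> (j <= n)%N ->
    Kpolar (fun chi : D => ev chi (c *+ (2 ^ j))).
Proof.
pose d : R := (4 * 2 ^+ n)^-1.
have d_gt0 : 0 < d by rewrite invr_gt0 mulr_gt0 // exprn_gt0.
pose KO := [set g | g @` K `<=` pi @` ball 0 d] : set {compact-open, D -> T}.
have KO_open : open KO.
  exact: compact_open_open K_compact (open_torus_ball _ _).
have KO_alpha0 : KO (alpha R A 0).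
  move=> _ [chi _ <-]; rewrite /alpha dual_val0.
  by exists 0 => //; exact: ballxx.
exists (alpha R A @^-1` KO).
  exact: alpha_continuous (open_nbhs_nbhs (conj KO_open KO_alpha0)).
move=> c j c_KO j_n; apply: eval_in_polar => chi K_chi.
have [y y_small chi_c] : exists2 y : R, `|y| < d & pi y = ev chi c.
  have [y] : (pi @` ball 0 d) (ev chi c) by apply: c_KO; exists chi.
  by rewrite /ball /= sub0r normrN; exists y.
rewrite dual_valMn -chi_c -torus_piMn; apply: Lambda_pi.
rewrite normrMn -[`|y| *+ _]mulr_natr natrX.
move: y_small; rewrite /d invfM ltr_pdivlMr ?exprn_gt0 // => y_small.
apply: le_trans (ltW y_small); apply: ler_wpM2l => //.
by apply: ler_weXn2l => //; rewrite ler1n.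
Qed.

(* If chi sends the 2^j-multiples of c, j <= n, into Lambda1, then chi c has
   a representative of size at most 2^-n / 4 (no doubling may wrap around). *)
Lemma bipolar_equicontinuous {e : R} : 0 < e -> exists2 N : set A, nbhs 0 N &
  forall c chi, N c -> Kbipolar chi -> Lambda e (ev chi c).
Proof.
move=> e_gt0; have [n n_large] := exists_expr2_gt (4 * e)^-1.
have [N N0 N_polar] := near0_eval_doublings_in_polar n.
exists N => // c chi N_c chi_bipolar.
have doublings j : (j <= n)%N -> Lambda1 R (ev chi (c *+ (2 ^ j))).
  by move=> j_n; exact: chi_bipolar _ (N_polar _ _ N_c j_n).
have [y y_small chi_c] := Lambda_repr (doublings 0%N isT).
rewrite expn0 mulr1n in chi_c; rewrite chi_c; apply: Lambda_pi.
have : `|y| * 2 ^+ n <= 4^-1.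
  apply: Lambda1_iter_double => // j j_n.
  by rewrite torus_piMn -chi_c -dual_valMn; exact: doublings.
have p_gt0 : 0 < 2 ^+ n :> R by rewrite exprn_gt0.
move: n_large; rewrite invfM ltr_pdivrMr // => n_large y_bound.
rewrite -(ler_pM2r p_gt0) [e * _]mulrC; exact/ltW/(le_lt_trans y_bound).
Qed.

Section UltraLimit.
Variables (F : set_system D) (F_ultra : UltraFilter F) (f : A -> T).
Hypotheses (F_bipolar : F Kbipolar)
  (f_lim : forall a, (fun chi : D => ev chi a) @ F --> f a).

Lemma lim_additive : {morph f : a b / a + b}.
Proof.
move=> a b; apply: (cvg_unique torus_hausdorff (f_lim (a + b))).
have -> : (fun chi : D => ev chi (a + b)) = (fun chi => ev chi a + ev chi b).
  by apply: funext => chi; exact: dual_valD.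
exact: cvg_torusD.
Qed.

Lemma lim_equicontinuous {e : R} : 0 < e ->
  exists2 N : set A, nbhs 0 N & forall c, N c -> Lambda e (f c).
Proof.
move=> /bipolar_equicontinuous [N N0 N_Lambda]; exists N => // c N_c.
apply: (closed_cvg _ (closed_Lambda e) _ _ (f_lim c)).
by apply: filterS F_bipolar => chi; exact: N_Lambda.
Qed.

Lemma lim_continuous : continuous f.
Proof.
move=> a W /nbhs_torus_LambdaD [e e_gt0 W_e].
have [N N0 N_Lambda] := lim_equicontinuous e_gt0.
change (nbhs a [set b | W (f b)]).
apply: filterS (nbhs_translate a N0) => b N_ba.
rewrite /= -(subrK a b) lim_additive addrC -[f a]addr0.
by apply: W_e; [apply: Lambda_pi; rewrite normr0 ltW | exact: N_Lambda].
Qed.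

Definition lim_dual : D :=
  exist _ (f : {compact-open, A -> T})
    (mem_set (conj lim_continuous lim_additive)).

Lemma lim_uniform_on_compact {C : set A} {U : set T} : compact C -> open U ->
  f @` C `<=` U -> F [set chi : D | forall x, C x -> U (ev chi x)].
Proof.
move=> C_compact U_open fC_U.
apply: (proj1 (compact_near_coveringP C) C_compact D F
  (fun chi x => U (ev chi x))) => c C_c.
have U_fc : nbhs (f c) U.
  by apply: open_nbhs_nbhs; split => //; apply: fC_U; exists c.
have [e e_gt0 U_e] := nbhs_torus_LambdaD U_fc.
have [N N0 N_Lambda] := bipolar_equicontinuous e_gt0.
have near_fc : F [set chi | Lambda e (ev chi c - f c)] :=
  f_lim c _ (nbhs_Lambda_shift (f c) e_gt0).
exists ([set b | N (b - c)],
        [set chi | Kbipolar chi /\ Lambda e (ev chi c - f c)]).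
  by split; [exact: nbhs_translate | exact: filterI F_bipolar near_fc].
case=> b chi /= [N_bc [chi_bipolar chi_c]].
have -> : ev chi b = f c + (ev chi c - f c) + ev chi (b - c).
  by rewrite [f c + _]addrC subrK -dual_valD addrC subrK.
by apply: U_e => //; exact: N_Lambda chi_bipolar.
Qed.

Lemma lim_dual_cvg : F --> lim_dual.
Proof.
apply: set_type_cvg; apply/compact_open_cvgP => C U C_compact U_open fC_U.
change (F [set chi : D | (set_val chi : {compact-open, A -> T}) @` C `<=` U]).
apply: filterS (lim_uniform_on_compact C_compact U_open fC_U) => chi chi_C.
by move=> _ [x C_x <-]; exact: chi_C.
Qed.

Lemma lim_dual_bipolar : Kbipolar lim_dual.
Proof.
move=> phi phi_polar; have [[phi_continuous _] _] := phi_polar.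
rewrite /bidual_ev Lambda1E.
apply: (closed_cvg (F := F) (u_ := phi) _ (closed_Lambda _)).
- by apply: filterS F_bipolar => chi; apply; exact: phi_polar.
- by move=> W /phi_continuous; exact: lim_dual_cvg.
Qed.

End UltraLimit.

Lemma bipolar_compact : compact Kbipolar.
Proof.
rewrite compact_ultra => F F_ultra F_bipolar.
have [f f_lim] := choice (fun a => ultra_cvg_compact_space
  (fun chi : D => ev chi a) torus_compact F_ultra).
by exists (lim_dual F F_ultra f F_bipolar f_lim); split;
  [exact: lim_dual_bipolar | exact: lim_dual_cvg].
Qed.
End Bipolar.

Theorem mainTheorem7 (R : realType) (A : topologicalZmodType) :
  continuous (alpha R A) -> dual_QCP R A.
Proof. by move=> alpha_continuous K K_compact; exact: bipolar_compact. Qed.
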